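(* Let $\sigma>0$, $\eta>0$, $\hat\alpha>0$, $h>0$, $r\ge0$, $a\in\mathbb{R}$, and for $\beta\ge0$ let $v_\beta$ denote the unique $C^1[0,\infty)$ solution of $\frac{\sigma^2}2v'(y)=\beta+\frac{\hat\alpha}4v(y)^2+\eta y(v(y)-\frac h\eta)-av(y)$, $y\ge0$, $v(0)=-r$. Let $\underline\beta_2=-ar-\frac{\hat\alpha r^2}4$. If either $a>-\frac{\hat\alpha}4r$ and $\beta\in\mathcal D_1$, or $a\le-\frac{\hat\alpha}4r$ and $\beta\in\mathcal D_2$, then $\lim_{x\to\infty}v_\beta(x)=-\infty$.
   Context: $\mathcal D_1=\{\beta\ge0:\exists x_\beta\ge0$ such that $v_\beta$ is nondecreasing on $(0,x_\beta)$ and decreasing on $(x_\beta,\infty)\}$ and $\mathcal D_2=\{\beta>\underline\beta_2:\exists x_\beta\ge0$ such that $v_\beta$ is nondecreasing on $(0,x_\beta)$ and decreasing on $(x_\beta,\infty)\}$. *)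

From HB Require Import structures.
From mathcomp Require Import all_boot all_order all_algebra.
From mathcomp Require Import all_classical all_reals all_analysis.
Set Implicit Arguments. Unset Strict Implicit. Unset Printing Implicit Defensive.
Import Order.TTheory GRing.Theory Num.Theory numFieldNormedType.Exports.
Local Open Scope classical_set_scope.
Local Open Scope ring_scope.

(* v is a C^1[0,oo) solution of
   sigma^2/2 v'(y) = beta + alpha/4 v(y)^2 + eta y (v(y) - h/eta) - a v(y),  y >= 0,
   with v(0) = -r.  C^1 on [0,oo) is expressed as: v continuous on [0,oo)
   (one-sided at 0), differentiable on (0,oo) with the ODE there; continuity of
   v' up to 0 (and the right derivative at 0) then follows from the ODE. *)
Definition riccati_sol (R : realType) (sigma eta alpha h r a beta : R)
    (v : R -> R) : Prop :=
  [/\ {within [set y : R | 0 <= y], continuous v},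
      (forall y : R, 0 < y -> derivable v y 1),
      (forall y : R, 0 < y ->
         sigma ^+ 2 / 2 * derive1 v y =
         beta + alpha / 4 * v y ^+ 2 + eta * y * (v y - h / eta) - a * v y)
    & v 0 = - r].

Definition incr_then_decr (R : realType) (v : R -> R) : Prop :=
  exists x : R, 0 <= x /\
    (forall s t : R, 0 < s -> s <= t -> t < x -> v s <= v t) /\
    (forall s t : R, x < s -> s < t -> v t < v s).

Definition beta2_low (R : realType) (alpha r a : R) : R :=
  - a * r - alpha * r ^+ 2 / 4.

From HB Require Import structures.
From mathcomp Require Import all_boot all_order all_algebra.
From mathcomp Require Import all_classical all_reals all_analysis.
From mathcomp Require Import ring lra.
Import Order.TTheory GRing.Theory Num.Theory numFieldNormedType.Exports.
Local Open Scope classical_set_scope.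
Local Open Scope ring_scope.

(* Let L := h/eta.  Since v decreases on (x0, +oo), it either tends to -oo or
   is bounded below there.  In the second case v >= L eventually, for otherwise
   the drift term eta y (v - L) would force v' <= -1 for large y.  Hence v > L
   on (x0, +oo), and writing the equation at a point y far out, where eta y
   dominates, gives g := beta + alpha L^2/4 - a L < 0.  But v(0) = -r < L, so v
   crosses the level L upwards at some y > 0, where v'(y) >= 0; there the drift
   term vanishes and the equation reads sigma^2/2 v'(y) = g < 0. *)

Section RealFunctions.
Variable R : realType.
Implicit Types (f : R -> R) (a b c m x y : R).

Lemma derive1_ge0_at_right f x :
  derivable f x 1 -> (\forall h \near 0^'+, f x <= f (h + x)) ->
  0 <= derive1 f x.
Proof.
move=> fx fxh.
have quot_cvg : (fun h => h^-1 * (f (h + x) - f x)) @ 0^' --> derive1 f x.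
  move: fx; rewrite /derivable [X in X @ 0^'](_ : _ =
      (fun h => h^-1 * (f (h + x) - f x))); last first.
    by apply/funext => h /=; rewrite [h%:A]mulr1.
  by [].
have right_cvg : (fun h => h^-1 * (f (h + x) - f x)) @ 0^'+ --> derive1 f x.
  apply: cvg_trans quot_cvg; apply: cvg_fmap2; apply: within_subset.
  by move=> h /= h0; rewrite gt_eqF.
apply: (cvgr_to_ge right_cvg).
near=> h; apply: mulr_ge0.
- by rewrite invr_ge0 ltW//; near: h; exact: nbhs_right_gt.
- by rewrite subr_ge0; near: h.
Unshelve. all: end_near.
Qed.

Lemma last_crossing f a b c : a <= b -> {within `[a, b], continuous f} ->
  f a <= c < f b ->
  exists y, [/\ a <= y < b, f y = c & forall z, y < z <= b -> c < f z].
Proof.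
move=> ab fab /andP[fac cfb].
pose S := f @^-1` [set w | w <= c] `&` [set` `[a, b]].
have Sa : S a by split; rewrite //= in_itv/= lexx.
have S_ub : ubound S b by move=> y [_]; rewrite /= in_itv => /andP[].
have S_sup : has_sup S by split; [exists a | exists b].
have asup : a <= sup S := sup_upper_bound S_sup Sa.
have S_closed : closed S.
  rewrite /S closed_setIS; last exact: interval_closed.
  by move/continuous_closedP: fab; apply; exact: closed_le.
have [/= fsup _] : S (sup S).
  have : closure S (sup S) by case: S_sup => *; exact: closure_sup.
  by rewrite -(closure_id S).1.
have [y /[!in_itv]/= /andP[supy yb] fy] :
    exists2 y, y \in `[sup S, b] & f y = c.
  apply: IVT; first by apply: ge_sup S_ub; exists a.
    by apply: continuous_subspaceW fab; apply: subset_itvr; rewrite bnd_simp.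
  by rewrite ge_min fsup le_max (ltW cfb) orbT.
have ay := le_trans asup supy.
exists y; split => //.
  rewrite ay lt_neqAle yb andbT.
  by apply: contraTneq cfb => <-; rewrite fy ltxx.
move=> z /andP[yz zb]; rewrite ltNge; apply/negP => fzc.
have az : a <= z by apply: le_trans ay _; exact: ltW.
have zsup : z <= sup S.
  by apply: sup_upper_bound => //; split => //=; rewrite in_itv/= az.
by have := lt_le_trans yz (le_trans zsup supy); rewrite ltxx.
Qed.

Lemma derive1_le_slope f m x y : x < y ->
  {in `]x, y[, forall z, derivable f z 1} -> {within `[x, y], continuous f} ->
  {in `]x, y[, forall z, derive1 f z <= m} -> f y - f x <= m * (y - x).
Proof.
move=> xy df fc dfm.
have f_is_derive z : z \in `]x, y[ -> is_derive z 1 f (derive1 f z).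
  by move=> zxy; rewrite derive1E; exact/derivableP/df.
have [z zxy ->] := MVT xy f_is_derive fc.
by rewrite ler_wpM2r ?subr_ge0 ?(ltW xy) ?dfm.
Qed.

Lemma nonincreasing_unbounded_cvgNy f x0 :
  (forall s t, x0 < s -> s <= t -> f t <= f s) ->
  (forall B, exists2 y, x0 < y & f y < B) -> f x @[x --> +oo] --> -oo.
Proof.
move=> f_nincr f_unbounded; apply/cvgrNyPlt => B.
have [y x0y fyB] := f_unbounded B.
exists y; split; first exact: num_real.
by move=> z yz; apply: le_lt_trans fyB; apply: f_nincr => //; exact: ltW.
Qed.

End RealFunctions.

Section RiccatiTail.
Variables (R : realType) (sigma eta alpha h r a beta : R) (v : R -> R) (x0 : R).
Hypotheses (sigma_gt0 : 0 < sigma) (eta_gt0 : 0 < eta) (alpha_gt0 : 0 < alpha).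
Hypotheses (h_gt0 : 0 < h) (r_ge0 : 0 <= r).
Hypothesis v_sol : riccati_sol sigma eta alpha h r a beta v.
Hypothesis x0_ge0 : 0 <= x0.
Hypothesis v_decr : forall s t, x0 < s -> s < t -> v t < v s.

Local Notation L := (h / eta).
Local Notation k := (sigma ^+ 2 / 2).

Let rhs y w := beta + alpha / 4 * w ^+ 2 + eta * y * (w - L) - a * w.

Let L_gt0 : 0 < L. Proof. exact: divr_gt0. Qed.
Let k_gt0 : 0 < k. Proof. by rewrite divr_gt0 // exprn_gt0. Qed.

Let v_cont b c : 0 <= b -> {within `[b, c], continuous v}.
Proof.
case: v_sol => v_cont _ _ _ b_ge0; apply: continuous_subspaceW v_cont => y.
by rewrite /= in_itv/= => /andP[b_le_y _]; exact: le_trans b_le_y.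
Qed.

Let v_derivable y : 0 < y -> derivable v y 1.
Proof. by case: v_sol => _ + _ _; apply. Qed.

Let v_ode y : 0 < y -> k * derive1 v y = rhs y (v y).
Proof. by case: v_sol => _ _ + _; apply. Qed.

Let v0 : v 0 = - r. Proof. by case: v_sol. Qed.

Lemma riccati_rhs_le0 y : x0 < y -> rhs y (v y) <= 0.
Proof.
move=> x0y; rewrite -v_ode ?(le_lt_trans x0_ge0)//.
apply: mulr_ge0_le0; first exact: ltW.
apply: (@decr_derive1_le0_itvy _ v false x0 y); last by rewrite in_itv/= andbT.
- move=> z; rewrite inE/= in_itv/= andbT => x0z.
  exact/v_derivable/(le_lt_trans x0_ge0).
- by move=> s t; rewrite !in_itv/= !andbT => _ x0t; exact: v_decr.
Qed.

Section BoundedBelow.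
Variable B : R.
Hypothesis v_ge : forall y, x0 < y -> B <= v y.

Lemma riccati_steep_below_level y0 : x0 < y0 -> v y0 < L ->
  exists2 Y, x0 < Y & forall z, Y < z -> derive1 v z <= -1.
Proof.
move=> x0y0 vy0L.
pose M := `|B| + `|v y0|.
pose K := beta + alpha / 4 * M ^+ 2 + `|a| * M.
have gap_gt0 : 0 < eta * (L - v y0) by rewrite mulr_gt0 // subr_gt0.
exists (Num.max y0 ((K + k) / (eta * (L - v y0)))).
  by rewrite lt_max x0y0.
move=> z; rewrite gt_max => /andP[y0z zK].
have x0z := lt_trans x0y0 y0z.
have z_gt0 := le_lt_trans x0_ge0 x0z.
have vz_bound : `|v z| <= M.
  have := v_ge _ x0z; have := v_decr _ _ x0y0 y0z.
  have := ler_norm (- B); rewrite normrN.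
  have := ler_norm (v y0); have := normr_ge0 B; have := normr_ge0 (v y0).
  rewrite /M ler_norml; lra.
have quad : alpha / 4 * v z ^+ 2 <= alpha / 4 * M ^+ 2.
  apply: ler_wpM2l; first by rewrite divr_ge0 // ltW.
  by rewrite -real_normK ?num_real// ler_sqr ?nnegrE ?addr_ge0.
have lin : - (a * v z) <= `|a| * M.
  apply: le_trans (ler_norm _) _.
  by rewrite normrN normrM; apply: ler_wpM2l.
have drift : eta * z * (v z - L) <= eta * z * (v y0 - L).
  apply: ler_wpM2l; first by rewrite mulr_ge0 // ltW.
  by rewrite lerD2r ltW // v_decr.
have far : K + k < z * (eta * (L - v y0)) by rewrite -ltr_pdivrMr.
have drift_eq : eta * z * (v y0 - L) = - (z * (eta * (L - v y0))) by ring.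
rewrite -(ler_pM2l k_gt0) mulrN1 v_ode // /rhs; rewrite /K in far; lra.
Qed.

Lemma riccati_ge_level y : x0 < y -> L <= v y.
Proof.
move=> x0y; rewrite leNgt; apply/negP => vyL.
have [Y x0Y steep] := riccati_steep_below_level _ x0y vyL.
pose n := v Y - B + 1.
have n_gt0 : 0 < n by have := v_ge _ x0Y; rewrite /n; lra.
have Y_lt : Y < Y + n by rewrite ltrDl.
have Y_gt0 := le_lt_trans x0_ge0 x0Y.
have slope : v (Y + n) - v Y <= -1 * (Y + n - Y).
  apply: derive1_le_slope => //.
  - move=> z; rewrite in_itv/= => /andP[Yz _].
    exact/v_derivable/(lt_trans Y_gt0).
  - exact: v_cont (ltW Y_gt0).
  - by move=> z; rewrite in_itv/= => /andP[Yz _]; exact: steep.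
have := v_ge _ (lt_trans x0Y Y_lt).
by rewrite /n in slope *; lra.
Qed.

Lemma riccati_gt_level y : x0 < y -> L < v y.
Proof.
move=> x0y; have y_lt : y < y + 1 by rewrite ltrDl.
apply: le_lt_trans (v_decr _ _ x0y y_lt).
exact: riccati_ge_level (lt_trans x0y y_lt).
Qed.

Lemma riccati_level_rhs_lt0 : beta + alpha / 4 * L ^+ 2 - a * L < 0.
Proof.
pose c := a - alpha * L / 2.
pose y := x0 + 1 + `|c| / eta.
have c_eta_ge0 : 0 <= `|c| / eta by rewrite divr_ge0 // ltW.
have x0y : x0 < y by rewrite /y; lra.
have coef_gt0 : 0 < eta * y - c.
  have eta_y : eta * y = eta * (x0 + 1) + `|c|.
    by rewrite /y mulrDr mulrCA divff ?gt_eqF // mulr1.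
  have := ler_norm c; have : 0 < eta * (x0 + 1) by rewrite mulr_gt0 // ltr_pwDr.
  lra.
pose w := v y - L.
have w_gt0 : 0 < w by rewrite subr_gt0 riccati_gt_level.
have expand : rhs y (v y) =
    beta + alpha / 4 * L ^+ 2 - a * L + w * (eta * y - c) + alpha / 4 * w ^+ 2.
  by rewrite /rhs /w /c; field; exact: lt0r_neq0.
have := riccati_rhs_le0 _ x0y; rewrite expand.
have := mulr_gt0 w_gt0 coef_gt0.
have : 0 <= alpha / 4 * w ^+ 2 by rewrite mulr_ge0 ?sqr_ge0 ?divr_ge0 ?ltW.
lra.
Qed.

Lemma riccati_bounded_below_absurd : False.
Proof.
pose t := x0 + 1.
have x0t : x0 < t by rewrite ltrDl.
have t_ge0 : 0 <= t := le_trans x0_ge0 (ltW x0t).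
have L_cross : v 0 <= L < v t.
  rewrite v0 riccati_gt_level // andbT.
  by apply: le_trans (ltW L_gt0); rewrite oppr_le0.
have [y [/andP[y_ge0 yt] vy above]] :=
  @last_crossing _ v 0 t L t_ge0 (v_cont 0 t (lexx _)) L_cross.
have y_gt0 : 0 < y.
  rewrite lt_neqAle y_ge0 andbT; apply/eqP => y_eq0.
  by move: vy L_gt0; rewrite -y_eq0 v0 => <-; rewrite oppr_gt0 ltNge r_ge0.
have dv_ge0 : 0 <= derive1 v y.
  apply: derive1_ge0_at_right; first exact: v_derivable.
  near=> e; rewrite vy; apply/ltW/above; rewrite ltrDr -lerBrDr.
  apply/andP; split; near: e; first exact: nbhs_right_gt.
  by apply: nbhs_right_ltW; rewrite subr_gt0.
have := v_ode _ y_gt0; rewrite vy /rhs subrr mulr0 addr0 => k_dv.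
by have := riccati_level_rhs_lt0; rewrite -k_dv ltNge mulr_ge0 // ltW.
Unshelve. all: end_near.
Qed.

End BoundedBelow.

Lemma riccati_unbounded_below B : exists2 y, x0 < y & v y < B.
Proof.
apply: contrapT => /forall2NP no_y; apply: (riccati_bounded_below_absurd B).
by move=> y x0y; case: (no_y y) => // /negP; rewrite -leNgt.
Qed.

Lemma riccati_cvgNy : v x @[x --> +oo] --> -oo.
Proof.
apply: (@nonincreasing_unbounded_cvgNy _ v x0).
  move=> s t x0s; rewrite le_eqVlt => /predU1P[-> // | st].
  exact/ltW/v_decr.
exact: riccati_unbounded_below.
Qed.

End RiccatiTail.

Theorem lemma13 (R : realType) (sigma eta alpha h r a beta : R) (v : R -> R) :
  0 < sigma -> 0 < eta -> 0 < alpha -> 0 < h -> 0 <= r -> 0 <= beta ->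
  riccati_sol sigma eta alpha h r a beta v ->
  ((a > - (alpha / 4) * r /\ incr_then_decr v) \/
   (a <= - (alpha / 4) * r /\ beta > beta2_low alpha r a /\ incr_then_decr v)) ->
  v x @[x --> +oo%R] --> -oo%R.
Proof.
move=> sigma_gt0 eta_gt0 alpha_gt0 h_gt0 r_ge0 _ v_sol cases.
have [x0 [x0_ge0 [_ v_decr]]] : incr_then_decr v by case: cases => [[]|[_ []]].
exact: (@riccati_cvgNy R sigma eta alpha h r a beta v x0).
Qed.
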